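(* Let $\Gamma$ be a labeled graph with $V$ vertices and $E$ edges, let $k\ge0$ and let $D,C_1,\ldots,C_V$ be symbols. Then $$\big(\lambda_\Gamma(C_1,\ldots,C_V)\big)_{,\mu_1\ldots\mu_k}J^{\mu_1\nu_1}\cdots J^{\mu_k\nu_k}D_{,\nu_1\ldots\nu_k}=\sum_{\Gamma'}\lambda_{\Gamma'}(C_1,\ldots,C_V,D),$$ where the sum runs over all labeled graphs $\Gamma'$ with $V+1$ vertices and $E+k$ edges obtained from $\Gamma$ (keeping its vertex and edge labels) by adding a vertex labeled $V+1$ and $k$ edges labeled $E+1,\ldots,E+k$, each joining some vertex of $\Gamma$ to the vertex $V+1$.
   Context: Coordinates $z=(z^1,\ldots,z^{2N})=(x,p)$ on $T^*\mathbb{R}^N$, $(J^{\mu\nu})=\begin{pmatrix}0&I_N\\-I_N&0\end{pmatrix}$, $C_{,\mu_1\ldots\mu_k}$ denotes partial derivatives, repeated indices summed. A labeled graph with $V$ vertices and $E$ edges is a map $s:\{1,\ldots,E\}\to\mathcal{P}_2\{1,\ldots,V\}$ (edge $e$ joins the vertices in $s(e)$); an edge with $s(e)=\{i,j\}$, $i<j$, is oriented $i\to j$. $\lambda_\Gamma(C_1,\ldots,C_V)$: place $C_v$ at vertex $v$ and a factor $J^{\mu_e\nu_e}$ at each edge $e$, differentiate $C_v$ by $\partial_{z^{\mu_e}}$ for each edge $e$ leaving $v$ and by $\partial_{z^{\nu_e}}$ for each edge entering $v$, multiply and sum over all indices. *)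

From HB Require Import structures.
From mathcomp Require Import all_boot all_order all_algebra.
From mathcomp Require Import all_classical all_reals all_analysis.
Set Implicit Arguments. Unset Strict Implicit. Unset Printing Implicit Defensive.
Import Order.TTheory GRing.Theory Num.Theory.
Import numFieldNormedType.Exports.
Local Open Scope ring_scope.

Section Defs.
Variables (R : realType) (N : nat).

(* phase space T^* R^N = R^(2N), coordinates z = (x, p) indexed by 'I_(N + N) *)
Definition pt := 'rV[R]_(N + N).

Definition pd (i : 'I_(N + N)) (f : pt -> R) : pt -> R :=
  fun z => 'D_(delta_mx 0 i : pt) f z.

Definition pds (s : seq 'I_(N + N)) (f : pt -> R) : pt -> R := foldr pd f s.

Definition smooth (f : pt -> R) : Prop :=
  forall (s : seq 'I_(N + N)) (z : pt), differentiable (pds s f) z.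

(* the symplectic matrix J = [[0, I_N], [-I_N, 0]] *)
Definition Jsymp (i j : 'I_(N + N)) : R :=
  if (i < N)%N && (j == (i + N)%N :> nat) then 1
  else if (N <= i)%N && (i == (j + N)%N :> nat) then -1 else 0.

(* a labeled graph with V vertices and E edges: edge e joins (s e).1 -> (s e).2,
   the 2-element set {(s e).1, (s e).2} being oriented from smaller to larger *)
Definition wf_graph (V E : nat) (s : {ffun 'I_E -> 'I_V * 'I_V}) : bool :=
  [forall e, ((s e).1 < (s e).2)%N].

(* indices by which C_v is differentiated: mu_e for edges leaving v, nu_e for
   edges entering v (in order of the edge labels) *)
Definition vertex_indices (V E : nat) (s : {ffun 'I_E -> 'I_V * 'I_V})
  (mu nu : {ffun 'I_E -> 'I_(N + N)}) (v : 'I_V) : seq 'I_(N + N) :=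
  [seq (if (s e).1 == v then mu e else nu e)
     | e <- enum 'I_E & ((s e).1 == v) || ((s e).2 == v)].

Definition lambda (V E : nat) (s : {ffun 'I_E -> 'I_V * 'I_V})
  (C : 'I_V -> pt -> R) : pt -> R :=
  fun z => \sum_(mu : {ffun 'I_E -> 'I_(N + N)})
           \sum_(nu : {ffun 'I_E -> 'I_(N + N)})
             (\prod_(e : 'I_E) Jsymp (mu e) (nu e)) *
             \prod_(v : 'I_V) pds (vertex_indices s mu nu v) (C v) z.

Definition ext_fam (V : nat) (C : 'I_V -> pt -> R) (D : pt -> R)
  (v : 'I_V.+1) : pt -> R :=
  match unlift ord_max v with Some w => C w | None => D end.

(* Gamma' is obtained from Gamma by adding vertex V+1 (= ord_max) and
   k edges labeled E+1..E+k (= rshift E i), each joining a vertex of Gamma to V+1 *)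
Definition extends (V E k : nat) (s : {ffun 'I_E -> 'I_V * 'I_V})
  (s' : {ffun 'I_(E + k) -> 'I_V.+1 * 'I_V.+1}) : bool :=
  wf_graph s' &&
  [forall e : 'I_E, s' (lshift k e) == (widen_ord (leqnSn V) (s e).1,
                                        widen_ord (leqnSn V) (s e).2)] &&
  [forall i : 'I_k, ((s' (rshift E i)).1 != ord_max) &&
                    ((s' (rshift E i)).2 == ord_max)].

End Defs.

From HB Require Import structures.
From mathcomp Require Import all_boot all_order all_algebra.
From mathcomp Require Import all_classical all_reals all_analysis.
From mathcomp Require Import ring lra.
Import Order.TTheory GRing.Theory Num.Theory.
Import numFieldNormedType.Exports.
Local Open Scope ring_scope.
Set Implicit Arguments. Unset Strict Implicit. Unset Printing Implicit Defensive.

(* Expanding lambda_Gamma over the index assignments (mu_e, nu_e), each term is a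
   product over the vertices of derivatives of the C_v.  By the Leibniz rule, the
   k further derivatives mu_1 .. mu_k distribute over the vertices along a map
   w : {1..k} -> {1..V}, and since partial derivatives of smooth functions commute
   (Schwarz), those landing on C_v may be applied after the ones coming from Gamma.
   The term indexed by w, multiplied by J^{mu_i nu_i} D_{,nu_1 .. nu_k}, is then
   the term of lambda_Gamma' for the graph Gamma' whose new edge E+i joins w(i) to
   the new vertex V+1, and w |-> Gamma' is a bijection onto the admissible
   extensions of Gamma. *)

Section Schwarz.
Context {R : realType} {V : normedModType R}.
Implicit Types (f g : V -> R) (a b x y : V).

Lemma diff_remainder_le g x (e : R) : differentiable g x -> 0 < e ->
  exists2 d : R, 0 < d &
    forall y, `|y| < d -> `|g (x + y) - g x - 'd g x y| <= e * `|y|.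
Proof.
move=> /diff_locally dg e0.
have /nbhs_norm0P [d d0 Hd] := (eqaddoP _ _ _ _).1 dg e e0.
exists d => // y /Hd; rewrite /= !fctE /=.
by rewrite opprD addrA [x + y]addrC.
Qed.

Lemma derive_line f x a (t : R) :
  derivable (fun s : R => f (x + s *: a)) t 1 = derivable f (x + t *: a) a /\
  'D_1 (fun s : R => f (x + s *: a)) t = 'D_a f (x + t *: a).
Proof.
suff E : (fun h : R => h^-1 *: (((fun s => f (x + s *: a)) \o shift t) (h *: 1)
                                 - f (x + t *: a)))
        = (fun h : R => h^-1 *: ((f \o shift (x + t *: a)) (h *: a) - f (x + t *: a))).
  by rewrite /derivable /derive E.
by apply: funext => h /=; rewrite [h%:A]mulr1 scalerDl addrCA.
Qed.

Definition second_difference f a b x (t : R) :=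
  f (x + t *: b + t *: a) - f (x + t *: a) - (f (x + t *: b) - f x).

Lemma second_differenceC f a b x t :
  second_difference f a b x t = second_difference f b a x t.
Proof. rewrite /second_difference [x + t *: b + _]addrAC; ring. Qed.

Lemma second_difference_mvt f a b x t : (forall y, differentiable f y) -> 0 < t ->
  exists2 c, 0 < c < t & second_difference f a b x t =
    t * ('D_a f (x + t *: b + c *: a) - 'D_a f (x + c *: a)).
Proof.
move=> df t0.
pose phi s := f (x + t *: b + s *: a) - f (x + s *: a).
have dline y s : derivable (fun s : R => f (y + s *: a)) s 1.
  by rewrite (derive_line f y a s).1; exact: diff_derivable.
have dphi s : derivable phi s 1 by exact: derivableB.
have [c] : exists2 c, c \in `]0, t[ & phi t - phi 0 = 'D_1 phi c * (t - 0).
  apply: MVT => //.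
  by apply: (derivable_within_continuous (i := `[0, t])) => y _.
rewrite in_itv /= => c0t Hc; exists c => //.
have -> : second_difference f a b x t = phi t - phi 0.
  by rewrite /phi /second_difference !scale0r !addr0.
rewrite Hc deriveB // (derive_line f _ a c).2 (derive_line f x a c).2.
by rewrite subr0 mulrC.
Qed.

Lemma second_difference_approx f a b x (e : R) :
  (forall y, differentiable f y) -> differentiable ('D_a f) x -> 0 < e ->
  exists2 d : R, 0 < d & forall t : R, 0 < t -> t < d ->
    `|second_difference f a b x t - t ^+ 2 * 'D_b ('D_a f) x| <= e * t ^+ 2.
Proof.
move=> df dg e0.
pose M := `|a| + `|b| + 1.
have M0 : 0 < M by rewrite /M; have := normr_ge0 a; have := normr_ge0 b; lra.
have eM0 : 0 < e / (2 * M) by rewrite divr_gt0 // mulr_gt0.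
have [d d0 near_linear] := diff_remainder_le dg eM0.
exists (d / M) => [|t t0 td]; first by rewrite divr_gt0.
have tMd : t * M < d by rewrite -ltr_pdivlMr.
(* both intermediate points lie within [t * M] of [x], where ['D_a f] is
   approximately linear *)
have [c /andP [c0 ct] ->] := second_difference_mvt a b x df t0.
set g := 'D_a f; set L := 'd g x.
set y1 := t *: b + c *: a; set y2 := c *: a.
have ca : c * `|a| <= t * `|a| by rewrite ler_wpM2r // ltW.
have ny2 : `|y2| <= t * M.
  rewrite normrZ ger0_norm ?(ltW c0) //.
  by have := normr_ge0 a; have := normr_ge0 b; rewrite /M; nra.
have ny1 : `|y1| <= t * M.
  rewrite (le_trans (ler_normD _ _)) // !normrZ !ger0_norm ?(ltW t0) ?(ltW c0) //.
  by have := normr_ge0 a; have := normr_ge0 b; rewrite /M; nra.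
have r1 := near_linear y1 (le_lt_trans ny1 tMd).
have r2 := near_linear y2 (le_lt_trans ny2 tMd).
have Ly : L y1 - L y2 = t * L b by rewrite /y1 linearD addrK linearZ.
rewrite -addrA -/y1 (deriveE _ dg) -/L.
have -> : t * (g (x + y1) - g (x + y2)) - t ^+ 2 * L b =
          t * ((g (x + y1) - g x - L y1) - (g (x + y2) - g x - L y2)).
  by rewrite expr2 -mulrA -Ly; ring.
rewrite normrM ger0_norm ?(ltW t0) //.
have -> : e * t ^+ 2 = t * (e / (2 * M) * (2 * (t * M))) by field; rewrite gt_eqF.
rewrite ler_wpM2l ?(ltW t0) // (le_trans (ler_normB _ _)) //.
have := ler_wpM2l (ltW eM0) ny1; have := ler_wpM2l (ltW eM0) ny2; lra.
Qed.

Lemma deriveC f a b x : (forall y, differentiable f y) ->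
  differentiable ('D_a f) x -> differentiable ('D_b f) x ->
  'D_b ('D_a f) x = 'D_a ('D_b f) x.
Proof.
move=> df dfa dfb; apply/eqP; rewrite -subr_eq0 -normr_le0.
apply/ler_addgt0Pr => e e0; rewrite add0r.
have e20 : 0 < e / 2 by rewrite divr_gt0.
have [d1 d10 approx_ab] := second_difference_approx b df dfa e20.
have [d2 d20 approx_ba] := second_difference_approx a df dfb e20.
pose t := Num.min d1 d2 / 2.
have t0 : 0 < t by rewrite divr_gt0 // lt_min d10 d20.
have /andP [td1 td2] : (t < d1) && (t < d2).
  by rewrite -lt_min /t ltr_pdivrMr // ltr_pMr ?ltr1n // lt_min d10 d20.
have {}approx_ab := approx_ab t t0 td1.
have {}approx_ba := approx_ba t t0 td2; rewrite second_differenceC in approx_ba.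
have t20 : 0 < t ^+ 2 by rewrite exprn_gt0.
have scaled : `|t ^+ 2 * ('D_b ('D_a f) x - 'D_a ('D_b f) x)| <= t ^+ 2 * e.
  have split_diff (u v w c : R) : c * (v - w) = (u - c * w) - (u - c * v) by ring.
  rewrite (split_diff (second_difference f a b x t)) (le_trans (ler_normB _ _)) //.
  apply: le_trans (lerD approx_ba approx_ab) _.
  by rewrite -mulrDl -splitr mulrC.
by rewrite normrM ger0_norm ?(ltW t20) // ler_pM2l in scaled.
Qed.

End Schwarz.

Section BigDerive.
Context {R : realType} {V : normedModType R}.
Variables (I : Type) (F : I -> V -> R) (x : V).
Hypothesis dF : forall i, differentiable (F i) x.

Lemma differentiable_sum_seq (r : seq I) :
  differentiable (fun y => \sum_(i <- r) F i y) x.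
Proof.
rewrite -fct_sumE; elim/big_ind: _ => // f g df dg.
exact: differentiableD df dg.
Qed.

Lemma differentiable_prod_seq (r : seq I) :
  differentiable (fun y => \prod_(i <- r) F i y) x.
Proof.
rewrite -fct_prodE; elim/big_ind: _ => // f g df dg.
exact: differentiableM df dg.
Qed.

Lemma derive_sum_seq (r : seq I) a :
  'D_a (fun y => \sum_(i <- r) F i y) x = \sum_(i <- r) 'D_a (F i) x.
Proof.
elim: r => [|i s IH].
  by under eq_fun do rewrite big_nil; rewrite big_nil derive_cst.
have -> : (fun y => \sum_(j <- i :: s) F j y) = F i + (fun y => \sum_(j <- s) F j y).
  by apply: funext => y; rewrite big_cons.
rewrite big_cons deriveD ?IH //; apply: diff_derivable => //.
exact: differentiable_sum_seq.
Qed.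

End BigDerive.

Lemma derive_prod {R : realType} {V : normedModType R} n (F : 'I_n -> V -> R) x a :
  (forall v, differentiable (F v) x) ->
  'D_a (fun y => \prod_(v < n) F v y) x =
  \sum_(w < n) \prod_(v < n) (if v == w then 'D_a (F v) x else F v x).
Proof.
elim: n F => [|n IH] F dF.
  have -> : (fun y => \prod_(v < 0) F v y) = cst 1.
    by apply: funext => y; rewrite big_ord0.
  by rewrite big_ord0 derive_cst.
pose Fl v := F (widen_ord (leqnSn n) v).
have -> : (fun y => \prod_(v < n.+1) F v y) =
          (fun y => \prod_(v < n) Fl v y) * F ord_max.
  by apply: funext => y; rewrite big_ord_recr.
have dFl : differentiable (fun y => \prod_(v < n) Fl v y) x.
  by apply: differentiable_prod_seq => v; exact: dF.
rewrite deriveM; [|exact: diff_derivable|exact: diff_derivable].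
rewrite (IH Fl) => [|v]; last exact: dF.
have widen_max (w : 'I_n) : (ord_max == widen_ord (leqnSn n) w) = false.
  by rewrite -val_eqE /= gtn_eqF.
have widen_eq (v w : 'I_n) :
  (widen_ord (leqnSn n) v == widen_ord (leqnSn n) w) = (v == w).
  by rewrite -val_eqE.
rewrite [RHS]big_ord_recr /= [X in _ = _ + X]big_ord_recr /= eqxx.
under [X in _ = X + _]eq_bigr => w _ do rewrite big_ord_recr /= widen_max.
under [X in _ = X + _]eq_bigr => w _ do under eq_bigr => v _ do rewrite widen_eq.
under [X in _ = _ + X * _]eq_bigr => v _ do rewrite eq_sym widen_max.
by rewrite -mulr_suml addrC; congr (_ + _); exact: mulrC.
Qed.

Section FinFunSplit.
Variables (T : finType) (M : nmodType).

Definition ffcons k (u : T) (w : {ffun 'I_k -> T}) : {ffun 'I_k.+1 -> T} :=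
  [ffun i => if unlift ord0 i is Some j then w j else u].

Lemma ffcons0 k u (w : {ffun 'I_k -> T}) : ffcons u w ord0 = u.
Proof. by rewrite ffunE unlift_none. Qed.

Lemma ffconsS k u (w : {ffun 'I_k -> T}) j : ffcons u w (lift ord0 j) = w j.
Proof. by rewrite ffunE liftK. Qed.

Lemma big_ffunS k (G : {ffun 'I_k.+1 -> T} -> M) :
  \sum_w G w = \sum_(u : T) \sum_(w : {ffun 'I_k -> T}) G (ffcons u w).
Proof.
rewrite pair_bigA (reindex (fun p : T * {ffun 'I_k -> T} => ffcons p.1 p.2)) //=.
exists (fun w : {ffun 'I_k.+1 -> T} => (w ord0, [ffun j => w (lift ord0 j)])).
  move=> [u w] _; rewrite ffcons0; congr (_, _).
  by apply/ffunP => j; rewrite ffunE ffconsS.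
move=> w _; apply/ffunP => i; rewrite ffunE.
by case: unliftP => [j ->|->]; rewrite ?ffunE.
Qed.

Definition ffcat E k (a : {ffun 'I_E -> T}) (b : {ffun 'I_k -> T}) :
  {ffun 'I_(E + k) -> T} :=
  [ffun i => match fintype.split i with inl j => a j | inr j => b j end].

Lemma ffcat_lshift E k (a : {ffun 'I_E -> T}) (b : {ffun 'I_k -> T}) i :
  ffcat a b (lshift k i) = a i.
Proof. by rewrite ffunE (unsplitK (inl _)). Qed.

Lemma ffcat_rshift E k (a : {ffun 'I_E -> T}) (b : {ffun 'I_k -> T}) j :
  ffcat a b (rshift E j) = b j.
Proof. by rewrite ffunE (unsplitK (inr _)). Qed.

Lemma big_ffun_cat E k (G : {ffun 'I_(E + k) -> T} -> M) :
  \sum_w G w = \sum_(a : {ffun 'I_E -> T}) \sum_(b : {ffun 'I_k -> T}) G (ffcat a b).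
Proof.
rewrite pair_bigA.
rewrite (reindex (fun p : {ffun 'I_E -> T} * {ffun 'I_k -> T} => ffcat p.1 p.2)) //=.
exists (fun w => ([ffun i => w (lshift k i)], [ffun j => w (rshift E j)])).
  by move=> [a b] _; congr (_, _); apply/ffunP => j;
     rewrite ffunE ?ffcat_lshift ?ffcat_rshift.
move=> w _; apply/ffunP => i; rewrite ffunE.
by rewrite -{2}(splitK i); case: (fintype.split i) => j /=; rewrite ffunE.
Qed.

End FinFunSplit.

Section IteratedPartials.
Context {R : realType} {N : nat}.
Local Notation pt := (pt R N).
Implicit Types (f : pt -> R) (s t : seq 'I_(N + N)).

Lemma pds_cat s t f : pds (s ++ t) f = pds s (pds t f).
Proof. exact: foldr_cat. Qed.

Lemma smooth_pds t f : smooth f -> smooth (pds t f).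
Proof. by move=> sf s z; rewrite -pds_cat. Qed.

Lemma pdC i j f : smooth f -> pd i (pd j f) = pd j (pd i f).
Proof.
by move=> sf; apply: funext => z; apply: deriveC (sf [::]) (sf [:: j] z) (sf [:: i] z).
Qed.

Lemma pds_rcons i t f : smooth f -> pds (i :: t) f = pds (rcons t i) f.
Proof.
move=> sf; elim: t => [//|j t IH] /=.
by rewrite -IH /= pdC //; exact: smooth_pds.
Qed.

Lemma pds_catC s t f : smooth f -> pds (s ++ t) f = pds (t ++ s) f.
Proof.
move=> sf; elim: s t => [|i s IH] t; first by rewrite cats0.
by rewrite cat_cons pds_rcons // -cats1 -catA IH -catA.
Qed.

Lemma pds_lincomb (I : Type) (r : seq I) (c : I -> R) (G : I -> pt -> R) t :
  (forall i, smooth (G i)) ->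
  pds t (fun y => \sum_(i <- r) c i * G i y) =
  fun y => \sum_(i <- r) c i * pds t (G i) y.
Proof.
move=> sG; elim: t => [//|j t IH]; apply: funext => z.
have dG i : differentiable (pds t (G i)) z by exact: sG.
rewrite [LHS]/= IH /pd derive_sum_seq => [|i]; last exact: differentiableM.
by apply: eq_bigr => i _; rewrite deriveMl //; exact: diff_derivable.
Qed.

Lemma pds_prod V (F : 'I_V -> pt -> R) k (mu : 'I_k -> 'I_(N + N)) :
  (forall v, smooth (F v)) ->
  pds [seq mu i | i <- enum 'I_k] (fun y => \prod_(v < V) F v y) =
  fun z => \sum_(w : {ffun 'I_k -> 'I_V})
    \prod_(v < V) pds [seq mu i | i <- enum 'I_k & w i == v] (F v) z.
Proof.
move=> sF; elim: k mu => [|k IH] mu; apply: funext => z.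
  by rewrite enum_ord0 /= sumr_const card_ffun !card_ord expn0.
rewrite enum_ordSl map_cons -map_comp [LHS]/= (IH (mu \o lift ord0)) /pd.
rewrite derive_sum_seq => [|w]; last by apply: differentiable_prod_seq => v; exact: sF.
rewrite big_ffunS exchange_big /=; apply: eq_bigr => w _.
rewrite derive_prod => [|v]; last exact: sF.
apply: eq_bigr => u _; apply: eq_bigr => v _.
rewrite ffcons0 filter_map.
rewrite [in RHS](@eq_filter _ _ (fun i => w i == v)) => [|i]; last by rewrite /= ffconsS.
by rewrite eq_sym; case: eqP => _ /=; rewrite -map_comp.
Qed.

Lemma smooth_prod V (F : 'I_V -> pt -> R) :
  (forall v, smooth (F v)) -> smooth (fun y => \prod_(v < V) F v y).
Proof.
move=> sF s z; rewrite -[s](map_tnth_enum (in_tuple s)) pds_prod //.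
by apply: differentiable_sum_seq => w; apply: differentiable_prod_seq => v; exact: sF.
Qed.

End IteratedPartials.

Lemma enum_ord_add E k : enum 'I_(E + k) =
  [seq lshift k i | i <- enum 'I_E] ++ [seq rshift E i | i <- enum 'I_k].
Proof.
apply: (inj_map val_inj); rewrite map_cat val_enum_ord iotaD.
rewrite -(map_comp val (lshift k)) -(map_comp val (@rshift E k)).
congr (_ ++ _); first by rewrite (@eq_map _ _ _ val) // val_enum_ord.
by rewrite (@eq_map _ _ _ (addn E \o val)) // map_comp val_enum_ord -iotaDl addn0.
Qed.

Lemma widen_ord_lift_max n (v : 'I_n) : widen_ord (leqnSn n) v = lift ord_max v.
Proof. exact/val_inj/esym/lift_max. Qed.

Lemma ext_fam_lift (R : realType) N V (C : 'I_V -> pt R N -> R) D v :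
  ext_fam C D (lift ord_max v) = C v.
Proof. by rewrite /ext_fam liftK. Qed.

Lemma ext_fam_max (R : realType) N V (C : 'I_V -> pt R N -> R) D :
  ext_fam C D ord_max = D.
Proof. by rewrite /ext_fam unlift_none. Qed.

Section ExtendGraph.
Variables (V E k : nat) (s : {ffun 'I_E -> 'I_V * 'I_V}).

Definition extend_graph (w : {ffun 'I_k -> 'I_V}) :
  {ffun 'I_(E + k) -> 'I_V.+1 * 'I_V.+1} :=
  [ffun x => match fintype.split x with
     | inl e => (lift ord_max (s e).1, lift ord_max (s e).2)
     | inr i => (lift ord_max (w i), ord_max) end].

Lemma extend_graph_lshift w e :
  extend_graph w (lshift k e) = (lift ord_max (s e).1, lift ord_max (s e).2).
Proof. by rewrite ffunE (unsplitK (inl _)). Qed.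

Lemma extend_graph_rshift w i :
  extend_graph w (rshift E i) = (lift ord_max (w i), ord_max).
Proof. by rewrite ffunE (unsplitK (inr _)). Qed.

Lemma extend_graph_inj : injective extend_graph.
Proof.
move=> w1 w2 /ffunP eq_w; apply/ffunP => i.
by have := eq_w (rshift E i); rewrite !extend_graph_rshift => /(congr1 fst)/lift_inj.
Qed.

Lemma extends_extend_graph w : wf_graph s -> extends s (extend_graph w).
Proof.
move=> /forallP wf_s; apply/andP; split; first (apply/andP; split).
- apply/forallP => x; rewrite -(splitK x); case: (fintype.split x) => [e|i] /=.
    by rewrite extend_graph_lshift !lift_max; exact: wf_s.
  by rewrite extend_graph_rshift lift_max.
- by apply/forallP => e; rewrite extend_graph_lshift !widen_ord_lift_max.
- by apply/forallP => i; rewrite extend_graph_rshift eqxx andbT lift_eqF.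
Qed.

Lemma extendsP s' : extends s s' -> exists w, extend_graph w = s'.
Proof.
move=> /andP [/andP [_ /forallP s'_l] /forallP s'_r].
have /fin_all_exists [u u_lift] i : exists j, lift ord_max j = (s' (rshift E i)).1.
  have /andP [new_i _] := s'_r i; rewrite eq_sym in new_i.
  by have [j -> _] := unlift_some new_i; exists j.
exists (finfun u); apply/ffunP => x; rewrite -(splitK x).
case: (fintype.split x) => [e|i] /=.
  rewrite -/(lshift k e) extend_graph_lshift -!widen_ord_lift_max.
  by apply/esym/eqP/s'_l.
rewrite -/(rshift E i) extend_graph_rshift ffunE u_lift.
by have /andP [_ /eqP <-] := s'_r i; case: (s' _).
Qed.

Lemma sum_extends (M : nmodType) (F : {ffun 'I_(E + k) -> 'I_V.+1 * 'I_V.+1} -> M) :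
  wf_graph s -> \sum_(s' | extends s s') F s' = \sum_w F (extend_graph w).
Proof.
move=> wf_s; rewrite [RHS](partition_big extend_graph (extends s)) /=; last first.
  by move=> w _; exact: extends_extend_graph.
apply: eq_bigr => _ /extendsP [w0 <-].
rewrite (eq_bigl (pred1 w0)) ?big_pred1_eq // => w.
by rewrite /= (inj_eq extend_graph_inj).
Qed.

Section VertexIndices.
Variables (N : nat) (m n : {ffun 'I_E -> 'I_(N + N)}) (mu nu : {ffun 'I_k -> 'I_(N + N)}).
Variable w : {ffun 'I_k -> 'I_V}.

Lemma vertex_indices_lift v :
  vertex_indices (extend_graph w) (ffcat m mu) (ffcat n nu) (lift ord_max v) =
  vertex_indices s m n v ++ [seq mu i | i <- enum 'I_k & w i == v].
Proof.
rewrite /vertex_indices enum_ord_add filter_cat map_cat !filter_map -!map_comp.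
congr (_ ++ _).
  rewrite (@eq_filter _ _ (fun e => ((s e).1 == v) || ((s e).2 == v))) => [|e]; last first.
    by rewrite /= extend_graph_lshift !(inj_eq lift_inj).
  by apply: eq_map => e /=; rewrite extend_graph_lshift (inj_eq lift_inj) !ffcat_lshift.
rewrite (@eq_filter _ _ (fun i => w i == v)) => [|i]; last first.
  by rewrite /= extend_graph_rshift (inj_eq lift_inj) eq_liftF orbF.
apply/eq_in_map => i; rewrite mem_filter => /andP [wi _] /=.
by rewrite extend_graph_rshift (inj_eq lift_inj) wi ffcat_rshift.
Qed.

Lemma vertex_indices_max :
  vertex_indices (extend_graph w) (ffcat m mu) (ffcat n nu) ord_max =
  [seq nu i | i <- enum 'I_k].
Proof.
rewrite /vertex_indices enum_ord_add filter_cat map_cat !filter_map -!map_comp.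
rewrite (@eq_filter _ _ pred0) => [|e]; last first.
  by rewrite /= extend_graph_lshift !lift_eqF.
rewrite filter_pred0 (@eq_filter _ _ predT) => [|i]; last first.
  by rewrite /= extend_graph_rshift eqxx orbT.
rewrite filter_predT; apply: eq_map => i /=.
by rewrite extend_graph_rshift lift_eqF ffcat_rshift.
Qed.

End VertexIndices.
End ExtendGraph.

Section Lambda.
Variables (R : realType) (N V E k : nat) (s : {ffun 'I_E -> 'I_V * 'I_V}).
Variables (C : 'I_V -> pt R N -> R) (D : pt R N -> R).
Local Notation symp m n := (\prod_i Jsymp R (m i) (n i)).
Local Notation indices T := {ffun T -> 'I_(N + N)}.

Lemma pds_lambda (mu : indices 'I_k) z : (forall v, smooth (C v)) ->
  pds [seq mu i | i <- enum 'I_k] (lambda s C) z =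
  \sum_(m : indices 'I_E) \sum_(n : indices 'I_E) symp m n *
    \sum_(w : {ffun 'I_k -> 'I_V}) \prod_(v < V)
      pds (vertex_indices s m n v ++ [seq mu i | i <- enum 'I_k & w i == v]) (C v) z.
Proof.
move=> sC.
have -> : lambda s C = fun y => \sum_(p : indices 'I_E * indices 'I_E)
    symp p.1 p.2 * \prod_(v < V) pds (vertex_indices s p.1 p.2 v) (C v) y.
  by apply: funext => y; rewrite /lambda pair_bigA.
rewrite pds_lincomb => [|p]; last by apply: smooth_prod => v; exact: smooth_pds.
rewrite [RHS]pair_bigA; apply: eq_bigr => -[m n] _ /=; congr (_ * _).
rewrite pds_prod => [|v]; last exact: smooth_pds.
by apply: eq_bigr => w _; apply: eq_bigr => v _; rewrite -pds_cat pds_catC.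
Qed.

Lemma lambda_extend_graph (w : {ffun 'I_k -> 'I_V}) z :
  lambda (extend_graph s w) (ext_fam C D) z =
  \sum_(mu : indices 'I_k) \sum_(nu : indices 'I_k)
  \sum_(m : indices 'I_E) \sum_(n : indices 'I_E) (symp m n * symp mu nu) *
    (\prod_(v < V)
       pds (vertex_indices s m n v ++ [seq mu i | i <- enum 'I_k & w i == v]) (C v) z *
     pds [seq nu i | i <- enum 'I_k] D z).
Proof.
rewrite /lambda big_ffun_cat exchange_big; apply: eq_bigr => mu _.
under eq_bigr => m _ do rewrite big_ffun_cat exchange_big.
rewrite exchange_big; apply: eq_bigr => nu _; apply: eq_bigr => m _; apply: eq_bigr => n _.
congr (_ * _).
  rewrite big_split_ord; congr (_ * _); apply: eq_bigr => i _.
    by rewrite !ffcat_lshift.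
  by rewrite !ffcat_rshift.
rewrite big_ord_recr /= vertex_indices_max ext_fam_max; congr (_ * _).
by apply: eq_bigr => v _; rewrite widen_ord_lift_max vertex_indices_lift ext_fam_lift.
Qed.

End Lambda.

Theorem lemma4 (R : realType) (N V E k : nat)
  (s : {ffun 'I_E -> 'I_V * 'I_V}) (C : 'I_V -> 'rV[R]_(N + N) -> R)
  (D : 'rV[R]_(N + N) -> R) :
  wf_graph s ->
  (forall v, smooth (C v)) -> smooth D ->
  forall z : 'rV[R]_(N + N),
    \sum_(mu : {ffun 'I_k -> 'I_(N + N)}) \sum_(nu : {ffun 'I_k -> 'I_(N + N)})
      pds [seq mu i | i <- enum 'I_k] (lambda s C) z *
      (\prod_(i : 'I_k) Jsymp R (mu i) (nu i)) *
      pds [seq nu i | i <- enum 'I_k] D z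
    = \sum_(s' : {ffun 'I_(E + k) -> 'I_V.+1 * 'I_V.+1} | extends s s')
        lambda s' (ext_fam C D) z.
Proof.
(* both sides differentiate [D] in the same order *)
move=> wf_s sC _ z.
rewrite sum_extends //; under [RHS]eq_bigr => w _ do rewrite lambda_extend_graph.
rewrite [RHS]exchange_big; apply: eq_bigr => mu _.
rewrite [RHS]exchange_big; apply: eq_bigr => nu _.
rewrite pds_lambda // [RHS]exchange_big.
under [RHS]eq_bigr => m _ do rewrite exchange_big.
rewrite !mulr_suml; apply: eq_bigr => m _; rewrite !mulr_suml; apply: eq_bigr => n _.
rewrite mulr_sumr !mulr_suml; apply: eq_bigr => w _.
by rewrite mulrACA mulrA.
Qed.
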